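(* Let $f$ be a strategy-proof SCF and $G$ a gradual mechanism implementing $f$. If $G$ is indifference reaction-proof, then $G$ is incentive compatible.
   Context: Setting. $N$ finite set of agents, $X$ finite set of outcomes, finite type spaces $\Theta_i$, each type $\theta_i$ inducing a complete transitive preference $R(\theta_i)$ on $X$; $\Theta=\prod_i\Theta_i$. An SCF $f:\Theta\to X$ is strategy-proof if $f(\theta_i,\theta_{-i})\,R(\theta_i)\,f(\theta_i',\theta_{-i})$ for all $i,\theta_i,\theta_i',\theta_{-i}$. Dynamic game forms. A dynamic game form with perfect recall consists of a finite tree $\bar H$ of histories (finite sequences of action profiles) containing the empty initial history $\varnothing$, closed under prefixes ($\preceq$ prefix order, $\prec$ strict); terminal histories $Z$, non-terminal $H$; at each $h\in H$ a nonempty set $\mathbb P(h)$ of agents move simultaneously with available actions $A_i(h)$, all action profiles leading to successors; $\mathbb P(\varnothing)=N$; each agent's decision nodes $H_i$ are partitioned into information sets $\boldsymbol H_i$, with available actions constant on information sets and perfect recall; $\mathcal X:Z\to X$. For information sets of $i$, $\boldsymbol h_i\prec\bar{\boldsymbol h}_i$ if $h\prec\bar h$ for some $h\in\boldsymbol h_i,\bar h\in\bar{\boldsymbol h}_i$; $\bar{\boldsymbol h}_i$ is an immediate successor of $\boldsymbol h_i$ if $\boldsymbol h_i\prec\bar{\boldsymbol h}_i$ and no information set of $i$ lies strictly between them. Strategies choose an available action at each information set; $s_M$ denotes a profile for agents in $M$ ($s_{-i}$, $s_{-i,j}$ for agents other than $i$, other than $i,j$); a complete profile $s$ determines $z(s)$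 and $\mathcal X(s)=\mathcal X(z(s))$. Gradual mechanisms. A GM implementing $f$ is such a game form in which (1) actions of $i$ are nonempty subsets of $\Theta_i$; (2) at every $h\in H_i$ the available actions of $i$ are pairwise disjoint with union $\Theta_i(h)$, where for any history $h$, $\Theta_i(h)$ is the last action of $i$ in $h$ ($\Theta_i$ if $i$ has not acted); (3) $\mathcal X(z)=f(\theta)$ for all $z\in Z$, $\theta\in\Theta(z)=\prod_i\Theta_i(z)$. For a history $h$, $\Theta(h)=\prod_i\Theta_i(h)$; for an information set, $\Theta_i(\boldsymbol h_i)=\Theta_i(h)$ for $h\in\boldsymbol h_i$. Consistency. A history $h$ is consistent with $s_M$ ($M\subsetneq N$) if $h\preceq z(s_M,s_{N\setminus M})$ for some $s_{N\setminus M}$. Incentive compatibility. $s_i$ is unconditional for $\theta_i$ if $\theta_i\in s_i(h)$ for every $h\in H_i$ with $\theta_i\in\Theta_i(h)$ (denoted $s_{\theta_i}$). The GM is incentive compatible if $\mathcal X(s_{\theta_i},s_{-i})\,R(\theta_i)\,\mathcal X(s_i,s_{-i})$ for all $i,\theta_i$, unconditional $s_{\theta_i}$, $s_i$, $s_{-i}$. Indifference reaction-proofness. A GM $G$ implementing $f$ is indifference reaction-proof if for any two distinct agents $i,j\in N$, any pair of distinct information sets $\boldsymbol h_i^1,\boldsymbol h_i^2$ of $i$ that are immediate successors of a common information set $\boldsymbol h_i$ of $i$ with $\Theta_i(\boldsymbol h_i^1)=\Theta_i(\boldsymbol h_i^2)$, and any histories $h^1\in\boldsymbol h_i^1$, $h^2\in\boldsymbol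 h_i^2$ that are both consistent with a common strategy profile $s_{-i,j}$, there exists $h^k\in\{h^1,h^2\}$ such that $f(\theta)\,R(\theta_j^* )\,f(\theta')$ for all $\theta,\theta'\in\Theta(h^k)$ and all $\theta_j^*\in\Theta_j$. *)

From mathcomp Require Import all_boot.
From Stdlib Require List.

Set Implicit Arguments.
Unset Strict Implicit.
Unset Printing Implicit Defensive.

Section GradualMechanisms.

Variables (N : finType) (Theta : N -> finType) (X : finType).

Definition tprofile := forall i : N, Theta i.

(* An action profile at a node: Some a_i for movers (a_i a subset of Theta_i),
   None for agents who do not move. A history is a finite sequence of those. *)
Definition aprof := forall i : N, option {set Theta i}.
Definition history := seq aprof.
Definition aprof0 : aprof := fun _ => None.

Definition prefix (h z : history) : Prop := exists t, z = h ++ t.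
Definition sprefix (h z : history) : Prop := exists t, t <> [::] /\ z = h ++ t.

(* Theta_i(h) : last action of i in h, or Theta_i if i has not acted *)
Definition theta_i (i : N) (h : history) : {set Theta i} :=
  foldl (fun acc (a : aprof) => if a i is Some x then x else acc) setT h.

Definition in_theta (h : history) (th : tprofile) : Prop :=
  forall i, th i \in theta_i i h.

Record game := Game {
  hist : history -> Prop;
  movers : history -> {set N};
  acts : forall i : N, history -> {set {set Theta i}};
  info : forall i : N, history -> history -> Prop;      (* same information set of i *)
  outcome : history -> X
}.

Variable g : game.

Definition nonterminal (h : history) : Prop :=
  hist g h /\ exists a, hist g (rcons h a).
Definition terminal (h : history) : Prop :=
  hist g h /\ ~ exists a, hist g (rcons h a).
Definition decnode (i : N) (h : history) : Prop :=
  nonterminal h /\ i \in movers g h.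

Definition experience (i : N) (h : history) : seq (history * option {set Theta i}) :=
  map (fun k => (take k h, nth aprof0 h k i))
      (filter (fun k => i \in movers g (take k h)) (iota 0 (size h))).

Record is_game_form : Prop := {
  gf_root : hist g [::];
  gf_prefix_closed : forall h a, hist g (rcons h a) -> hist g h;
  gf_finite_depth : exists n, forall h, hist g h -> size h <= n;
  gf_root_movers : movers g [::] = setT;
  gf_movers_nonempty : forall h, nonterminal h -> movers g h != set0;
  gf_successors : forall h a, nonterminal h ->
    (hist g (rcons h a) <->
     forall i, if i \in movers g h then exists2 x, a i = Some x & x \in acts g i h
               else a i = None);
  gf_info_dom : forall i h h', info g i h h' -> decnode i h /\ decnode i h';
  gf_info_refl : forall i h, decnode i h -> info g i h h;
  gf_info_sym : forall i h h', info g i h h' -> info g i h' h;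
  gf_info_trans : forall i h h' h'', info g i h h' -> info g i h' h'' -> info g i h h'';
  gf_info_acts : forall i h h', info g i h h' -> acts g i h = acts g i h';
  gf_perfect_recall : forall i h h', info g i h h' ->
    List.Forall2 (fun p q => info g i p.1 q.1 /\ p.2 = q.2)
                 (experience i h) (experience i h')
}.

Record is_GM (f : tprofile -> X) : Prop := {
  gm_game_form : is_game_form;
  gm_acts_nonempty : forall i h x, decnode i h -> x \in acts g i h -> x != set0;
  gm_acts_disjoint : forall i h x y, decnode i h -> x \in acts g i h -> y \in acts g i h ->
    x != y -> [disjoint x & y];
  gm_acts_cover : forall i h, decnode i h -> \bigcup_(x in acts g i h) x = theta_i i h;
  gm_implements : forall z th, terminal z -> in_theta z th -> outcome g z = f th
}.

Definition sprofile := forall i : N, history -> {set Theta i}.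

Definition is_strategy (i : N) (s : history -> {set Theta i}) : Prop :=
  (forall h, decnode i h -> s h \in acts g i h) /\
  (forall h h', info g i h h' -> s h = s h').

Definition is_profile (s : sprofile) : Prop := forall i, is_strategy (s i).

Definition plays (s : sprofile) (z : history) : Prop :=
  terminal z /\
  forall k, k < size z -> forall i,
    nth aprof0 z k i = if i \in movers g (take k z) then Some (s i (take k z)) else None.

Definition consistent (M : {set N}) (s : sprofile) (h : history) : Prop :=
  exists s', is_profile s' /\ (forall k, k \in M -> forall h0, s' k h0 = s k h0) /\
    exists z, plays s' z /\ prefix h z.

Definition unconditional (i : N) (t : Theta i) (s : history -> {set Theta i}) : Prop :=
  forall h, decnode i h -> t \in theta_i i h -> t \in s h.

Variable R : forall i : N, Theta i -> X -> X -> Prop.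

Definition incentive_compatible : Prop :=
  forall i (t : Theta i) (s1 s2 : sprofile),
    is_profile s1 -> is_profile s2 ->
    (forall k, k != i -> forall h, s1 k h = s2 k h) ->
    unconditional t (s1 i) ->
    forall z1 z2, plays s1 z1 -> plays s2 z2 -> R t (outcome g z1) (outcome g z2).

(* information set of a precedes information set of b (a, b representatives) *)
Definition iprec (i : N) (a b : history) : Prop :=
  exists a' b', info g i a a' /\ info g i b b' /\ sprefix a' b'.

Definition immediate_succ (i : N) (a b : history) : Prop :=
  iprec i a b /\ ~ exists m, decnode i m /\ iprec i a m /\ iprec i m b.

Definition indifferent_at (f : tprofile -> X) (j : N) (h : history) : Prop :=
  forall th th', in_theta h th -> in_theta h th' -> forall tj : Theta j, R tj (f th) (f th').

Definition indifference_reaction_proof (f : tprofile -> X) : Prop :=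
  forall i j : N, i != j ->
  forall h0 h1 h2, decnode i h0 -> decnode i h1 -> decnode i h2 ->
    immediate_succ i h0 h1 -> immediate_succ i h0 h2 -> ~ info g i h1 h2 ->
    theta_i i h1 = theta_i i h2 ->
    forall s, is_profile s ->
      consistent (setT :\ i :\ j) s h1 -> consistent (setT :\ i :\ j) s h2 ->
      indifferent_at f j h1 \/ indifferent_at f j h2.

End GradualMechanisms.

Definition preferences_ok (N : finType) (Theta : N -> finType) (X : finType)
  (R : forall i : N, Theta i -> X -> X -> Prop) : Prop :=
  forall i (t : Theta i),
    (forall x y, R i t x y \/ R i t y x) /\
    (forall x y z, R i t x y -> R i t y z -> R i t x z).

Definition strategy_proof (N : finType) (Theta : N -> finType) (X : finType)
  (R : forall i : N, Theta i -> X -> X -> Prop) (f : tprofile Theta -> X) : Prop :=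
  forall i (th th' : tprofile Theta), (forall k, k != i -> th k = th' k) ->
    R i (th i) (f th) (f th').

From mathcomp Require Import all_boot zify.
From Stdlib Require List Classical.

Set Implicit Arguments.
Unset Strict Implicit.
Unset Printing Implicit Defensive.

(* Let agent d deviate from an unconditional truthful strategy for t while the
   others keep their strategies, giving plays z1 (truthful) and z2 (deviation).
   Shrink two prefixes of z1 and z2, keeping the invariant that the outcome of
   z1 is weakly preferred by t to f at every profile still possible after the
   first prefix, and f at every profile still possible after the second is
   weakly preferred to the outcome of z2.  If for every other agent the type
   sets reached by the two prefixes intersect, choose such a common profile,
   with d reporting t on the z1 side: strategy-proofness closes the chain.
   Otherwise some agent m <> d has disjoint type sets; since m plays the same
   strategy in both plays, they must have diverged in m's eyes at two
   immediate successors of a common information set where m holds the same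
   type set, and indifference reaction-proofness makes d indifferent over one
   of these nodes, so one prefix can be cut back to it. *)

Section GameForm.

Variables (N : finType) (Theta : N -> finType) (X : finType) (G : game Theta X).
Hypothesis GF : is_game_form G.

Local Notation history := (history Theta).
Local Notation aprof0 := (@aprof0 N Theta).

Definition nmoves (z : history) (m : N) (n : nat) : nat :=
  count (fun k => m \in movers G (take k z)) (iota 0 n).

Lemma nmovesS z m n : nmoves z m n.+1 = nmoves z m n + (m \in movers G (take n z)).
Proof. by rewrite /nmoves -addn1 iotaD count_cat /= addn0. Qed.

Lemma leq_nmoves z m a b : a <= b -> nmoves z m a <= nmoves z m b.
Proof.
move=> /subnK <-; elim: (b - a) => [|k IH] //.
by rewrite addSn nmovesS (leq_trans IH) // leq_addr.
Qed.

Lemma nmoves_last_move z m a k : nmoves z m a = k.+1 ->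
  exists b, [/\ b < a, m \in movers G (take b z), nmoves z m b = k
              & nmoves z m b.+1 = k.+1].
Proof.
elim: a => [|a IH] //; rewrite nmovesS.
case hm: (m \in movers G (take a z)).
  by rewrite addn1 => -[hk]; exists a; rewrite nmovesS hm hk addn1.
rewrite addn0 => /IH [b [hba hb hbk hbk1]]; exists b; split => //; exact: ltnW.
Qed.

Lemma nmoves_move z m a k : k < nmoves z m a ->
  exists b, [/\ b < a, m \in movers G (take b z) & nmoves z m b = k].
Proof.
elim: a => [|a IH] //; rewrite nmovesS.
case: (ltnP k (nmoves z m a)) => [/IH [b [hba hb hbk]] _|hk].
  by exists b; split => //; exact: ltnW.
case hm: (m \in movers G (take a z)); last by rewrite addn0 => h; lia.
by rewrite addn1 ltnS => hk'; exists a; split => //; lia.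
Qed.

Lemma nmoves_eq0 z m b : nmoves z m b = 0 -> b = 0.
Proof.
case: b => // b; apply: contra_eq => _.
have h1 : nmoves z m 1 = 1 by rewrite nmovesS take0 (gf_root_movers GF) inE.
by rewrite -lt0n -h1 leq_nmoves.
Qed.

Lemma size_experience m h :
  size (experience G m h) = count (fun k => m \in movers G (take k h)) (iota 0 (size h)).
Proof. by rewrite size_map size_filter. Qed.

Lemma size_experience_take z m n : n <= size z ->
  size (experience G m (take n z)) = nmoves z m n.
Proof.
move=> hn; rewrite size_experience size_takel //.
apply: eq_in_count => k; rewrite mem_iota /= add0n => hk.
by rewrite take_takel // ltnW.
Qed.

Lemma info_size_experience m h h' : info G m h h' ->
  size (experience G m h) = size (experience G m h').
Proof.
have size_length T (l : seq T) : size l = List.length l by elim: l => //= x l ->.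
by move/(gf_perfect_recall GF)/List.Forall2_length; rewrite !size_length.
Qed.

Lemma sprefix_size_experience m a b : m \in movers G a -> sprefix a b ->
  size (experience G m a) < size (experience G m b).
Proof.
move=> hm [[|x t] [//= _ ->]]; rewrite !size_experience size_cat iotaD count_cat add0n.
have -> : count (fun k => m \in movers G (take k (a ++ x :: t))) (iota 0 (size a)) =
          count (fun k => m \in movers G (take k a)) (iota 0 (size a)).
  apply: eq_in_count => k; rewrite mem_iota add0n /= => hk.
  by rewrite takel_cat // ltnW.
by rewrite /= take_size_cat // hm addnS ltnS leq_addr.
Qed.

Lemma iprec_size_experience m x y : iprec G m x y ->
  size (experience G m x) < size (experience G m y).
Proof.
move=> [x' [y' [hx [hy hxy]]]].
rewrite (info_size_experience hx) (info_size_experience hy).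
by have [_ [_ hm]] := gf_info_dom GF hx; apply: sprefix_size_experience hm hxy.
Qed.

Lemma sprefix_take (z : history) b a : b < a -> a <= size z ->
  sprefix (take b z) (take a z).
Proof.
move=> hba ha; exists (drop b (take a z)); split.
  by move/(congr1 size); rewrite size_drop size_takel //= => /eqP; rewrite subn_eq0 leqNgt hba.
by rewrite -{1}(take_takel z (ltnW hba)) cat_take_drop.
Qed.

Lemma immediate_succ_take m h0 z b a :
  info G m h0 (take b z) -> b < a -> a <= size z -> decnode G m (take a z) ->
  size (experience G m (take a z)) = (size (experience G m h0)).+1 ->
  immediate_succ G m h0 (take a z).
Proof.
move=> hi hba ha hd he; split.
  exists (take b z), (take a z); do !split=> //; last exact: sprefix_take.
  exact: (gf_info_refl GF).
by move=> [M [_ [/iprec_size_experience h1 /iprec_size_experience h2]]]; lia.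
Qed.

Lemma hist_take z n : hist G z -> hist G (take n z).
Proof.
elim/last_ind: z n => [|z a IH] n hza; first by case: n.
case: (leqP n (size z)) => hn; last by rewrite take_oversize // size_rcons.
by rewrite -cats1 takel_cat //; apply/IH/(gf_prefix_closed GF hza).
Qed.

Lemma decnode_take z m n : hist G z -> n < size z -> m \in movers G (take n z) ->
  decnode G m (take n z).
Proof.
move=> hz hn hm; split=> //; split; first exact: hist_take.
by exists (nth aprof0 z n); rewrite -take_nth //; apply: hist_take.
Qed.

Lemma hist_head x z : hist G (x :: z) -> hist G [:: x].
Proof. by move/(hist_take 1); rewrite /= take0. Qed.

Lemma plays_root_terminal s (z : history) : terminal G [::] -> plays G s z -> z = [::].
Proof. by case: z => // x z [_ hnt] [[/hist_head hx _] _]; case: hnt; exists x. Qed.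

Lemma plays_root_nonterminal s x (z : history) : plays G s (x :: z) -> nonterminal G [::].
Proof.
move=> [[/hist_head hx _] _]; split; last by exists x.
exact: (gf_root GF).
Qed.

Lemma theta_i_takeS m z n : n < size z ->
  theta_i m (take n.+1 z) = if nth aprof0 z n m is Some x then x else theta_i m (take n z).
Proof. by move=> hn; rewrite (take_nth aprof0) // /theta_i foldl_rcons. Qed.

(* [take a z] and [take a' z'] are the next nodes of [m] after the
   information-equivalent nodes [take b z] and [take b' z'], and they are no
   longer information-equivalent: the two plays separate in [m]'s eyes there. *)
Record divergence (z z' : history) (m : N) (a a' b b' : nat) : Prop := Divergence {
  div_size : a < size z; div_size' : a' < size z';
  div_lt : b < a; div_lt' : b' < a';
  div_move : m \in movers G (take a z); div_move' : m \in movers G (take a' z');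
  div_move_prev : m \in movers G (take b z); div_move_prev' : m \in movers G (take b' z');
  div_next : nmoves z m a = (nmoves z m b).+1;
  div_next' : nmoves z' m a' = (nmoves z' m b').+1;
  div_info_prev : info G m (take b z) (take b' z');
  div_not_info : ~ info G m (take a z) (take a' z') }.

Lemma divergence_sym z z' m a a' b b' :
  divergence z z' m a a' b b' -> divergence z' z m a' a b' b.
Proof.
case=> *; split=> //; first exact: (gf_info_sym GF).
by move/(gf_info_sym GF).
Qed.

Lemma info_or_divergence z z' m : hist G z -> hist G z' -> forall k n n',
  n < size z -> n' < size z' ->
  m \in movers G (take n z) -> m \in movers G (take n' z') ->
  nmoves z m n = k -> nmoves z' m n' = k ->
  info G m (take n z) (take n' z') \/
  exists a a' b b', [/\ divergence z z' m a a' b b', a <= n & a' <= n'].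
Proof.
move=> hz hz'; elim=> [|k IH] n n' hn hn' hm hm' hk hk'.
  move: (nmoves_eq0 hk) (nmoves_eq0 hk') => e e'; subst n n'; left.
  by rewrite !take0; apply: (gf_info_refl GF); have := decnode_take hz hn hm; rewrite take0.
have [b [hbn hb hbk hbk1]] := nmoves_last_move hk.
have [b' [hbn' hb' hbk' hbk1']] := nmoves_last_move hk'.
have [hi|[a [a' [c [c' [hdiv hab ha'b']]]]]] :=
  IH b b' (ltn_trans hbn hn) (ltn_trans hbn' hn') hb hb' hbk hbk'.
  case: (Classical_Prop.classic (info G m (take n z) (take n' z'))) => hn_info; first by left.
  by right; exists n, n', b, b'; split=> //; split; rewrite ?hk ?hk' ?hbk ?hbk'.
right; exists a, a', c, c'; split=> //.
  exact: leq_trans hab (ltnW hbn).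
exact: leq_trans ha'b' (ltnW hbn').
Qed.

End GameForm.

Section Mechanism.

Variables (N : finType) (Theta : N -> finType) (X : finType) (G : game Theta X).
Variable f : tprofile Theta -> X.
Hypothesis GM : is_GM G f.
Hypothesis Theta_inhabited : forall k, inhabited (Theta k).

Local Notation history := (history Theta).
Let GF := gm_game_form GM.

Lemma nonterminal_root_inhabited : nonterminal G [::] -> forall k, inhabited (Theta k).
Proof.
move=> [hroot [a ha]] k; have /(_ k) := (gf_successors GF a (conj hroot (ex_intro _ a ha))).1 ha.
rewrite (gf_root_movers GF) inE => -[x _ hx].
have hd : decnode G k [::] by split; [split; last exists a | rewrite (gf_root_movers GF) inE].
by have /set0Pn [y _] := gm_acts_nonempty GM hd hx; constructor.
Qed.

Lemma acts_sub_theta_i m h x : decnode G m h -> x \in acts G m h -> x \subset theta_i m h.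
Proof.
move=> hd hx; rewrite -(gm_acts_cover GM hd).
exact: (bigcup_sup (F := id) x hx).
Qed.

Section Play.

Variables (s : sprofile Theta) (z : history).
Hypotheses (Hs : is_profile G s) (Hz : plays G s z).

Lemma plays_hist : hist G z.
Proof. by case: Hz => [[]]. Qed.

Lemma plays_decnode_take m n : n < size z -> m \in movers G (take n z) ->
  decnode G m (take n z).
Proof. exact/decnode_take/plays_hist. Qed.

Lemma plays_theta_i_takeS m n : n < size z ->
  theta_i m (take n.+1 z) =
  if m \in movers G (take n z) then s m (take n z) else theta_i m (take n z).
Proof. by case: Hz => _ hp hn; rewrite theta_i_takeS // hp //; case: ifP. Qed.

Lemma plays_theta_i_takeS_sub m n : n < size z ->
  theta_i m (take n.+1 z) \subset theta_i m (take n z).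
Proof.
move=> hn; rewrite plays_theta_i_takeS //; case: ifP => // hm.
have hd := plays_decnode_take hn hm.
exact/acts_sub_theta_i/(proj1 (Hs m)).
Qed.

Lemma plays_theta_i_take_sub m a b : a <= b -> b <= size z ->
  theta_i m (take b z) \subset theta_i m (take a z).
Proof.
move=> /subnK <-; elim: (b - a) => [|k IH] hb; first by rewrite add0n.
by rewrite addSn in hb *; apply: subset_trans (plays_theta_i_takeS_sub m hb) (IH (ltnW hb)).
Qed.

Lemma plays_in_theta_take th a : a <= size z -> in_theta z th -> in_theta (take a z) th.
Proof.
move=> ha hth k; apply: (subsetP (plays_theta_i_take_sub k ha (leqnn _))).
by rewrite take_size.
Qed.

Lemma plays_theta_i_take_nonempty m n : n <= size z -> theta_i m (take n z) != set0.
Proof.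
elim: n => [|n IH] hn.
  by have [x] := Theta_inhabited m; apply/set0Pn; exists x; rewrite take0 inE.
rewrite plays_theta_i_takeS //; case: ifP => [hm|_]; last exact: IH (ltnW hn).
have hd := plays_decnode_take hn hm.
exact: (gm_acts_nonempty GM hd (proj1 (Hs m) _ hd)).
Qed.

Lemma plays_in_theta_exists : exists th, in_theta z th.
Proof.
have ex k : exists x, x \in theta_i k z.
  by apply/set0Pn; have := plays_theta_i_take_nonempty k (leqnn (size z)); rewrite take_size.
by exists (fun k => xchoose (ex k)) => k; apply: xchooseP.
Qed.

Lemma plays_theta_i_take_const m c a : c <= a -> a <= size z ->
  nmoves G z m a = nmoves G z m c -> theta_i m (take a z) = theta_i m (take c z).
Proof.
move=> /subnK <-; elim: (a - c) => [|k IH] //= ha hk.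
rewrite addSn in ha hk *; rewrite nmovesS in hk.
have hck := leq_nmoves G z m (leq_addl k c).
rewrite plays_theta_i_takeS //; case: ifP => hm; rewrite hm in hk; first lia.
by apply: IH (ltnW ha) _; rewrite -hk addn0.
Qed.

Lemma plays_theta_i_take_last_move m b a : b < a -> a <= size z ->
  m \in movers G (take b z) -> nmoves G z m a = (nmoves G z m b).+1 ->
  theta_i m (take a z) = s m (take b z).
Proof.
move=> hba ha hm hk.
rewrite (plays_theta_i_take_const hba ha); last by rewrite nmovesS hm addn1.
by rewrite plays_theta_i_takeS ?hm // (leq_trans hba).
Qed.

End Play.

Section TwoPlays.

Variables (s s' : sprofile Theta) (z z' : history) (m : N).
Hypotheses (Hz : plays G s z) (Hs' : is_profile G s') (Hz' : plays G s' z').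
Hypothesis same_strategy : forall h, s m h = s' m h.

(* If [m] had reached information-equivalent nodes at her last move before [P]
   on [z] and at the corresponding move on [z'], she would have taken the same
   action there, and her type sets could not be disjoint. *)
Lemma theta_i_disjoint_divergence_le P P' : P <= size z -> P' <= size z' ->
  nmoves G z m P <= nmoves G z' m P' ->
  theta_i m (take P z) :&: theta_i m (take P' z') = set0 ->
  exists a a' b b', [/\ divergence G z z' m a a' b b', a < P & a' < P'].
Proof.
move=> hP hP' hle hI.
have nonempty' := plays_theta_i_take_nonempty Hs' Hz' m hP'.
case hk: (nmoves G z m P) hle => [|k] hle.
  move: hI; rewrite (plays_theta_i_take_const Hz (leq0n P) hP) ?hk // take0.
  by rewrite [theta_i m [::]]/= setTI => e; rewrite e eqxx in nonempty'.
have [b [hbP hb hbk _]] := nmoves_last_move hk.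
have [b' [hbP' hb' hbk']] := nmoves_move hle.
have [hi|[a [a' [c [c' [hdiv hab ha'b']]]]]] :=
  info_or_divergence GF (plays_hist Hz) (plays_hist Hz')
    (leq_trans hbP hP) (leq_trans hbP' hP') hb hb' hbk hbk'.
  have e : theta_i m (take P z) = theta_i m (take b'.+1 z').
    rewrite (plays_theta_i_take_last_move Hz hbP hP hb) ?hk ?hbk //.
    rewrite (plays_theta_i_takeS Hz') ?hb' ?(leq_trans hbP' hP') //.
    by rewrite same_strategy; apply: (proj2 (Hs' m)).
  move: hI; rewrite e (setIidPr (plays_theta_i_take_sub Hs' Hz' m hbP' hP')) => e0.
  by rewrite e0 eqxx in nonempty'.
exists a, a', c, c'; split=> //.
  exact: leq_ltn_trans hab hbP.
exact: leq_ltn_trans ha'b' hbP'.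
Qed.

End TwoPlays.

Lemma theta_i_disjoint_divergence s s' z z' m P P' :
  is_profile G s -> plays G s z -> is_profile G s' -> plays G s' z' ->
  (forall h, s m h = s' m h) -> P <= size z -> P' <= size z' ->
  theta_i m (take P z) :&: theta_i m (take P' z') = set0 ->
  exists a a' b b', [/\ divergence G z z' m a a' b b', a < P & a' < P'].
Proof.
move=> Hs Hz Hs' Hz' hsm hP hP' hI.
case: (leqP (nmoves G z m P) (nmoves G z' m P')) => hle.
  exact: (theta_i_disjoint_divergence_le Hz Hs' Hz' hsm hP hP' hle hI).
have [a' [a [b' [b [hdiv ha' ha]]]]] :=
  theta_i_disjoint_divergence_le Hz' Hs Hz (fun h => esym (hsm h)) hP' hP (ltnW hle)
    (etrans (setIC _ _) hI).
by exists a, a', b, b'; split=> //; apply: (divergence_sym GF).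
Qed.

Lemma indifferent_at_outcome (R : forall i : N, Theta i -> X -> X -> Prop)
    j (tj : Theta j) s z a :
  is_profile G s -> plays G s z -> a <= size z -> indifferent_at R f j (take a z) ->
  forall th, in_theta (take a z) th -> R j tj (outcome G z) (f th) /\ R j tj (f th) (outcome G z).
Proof.
move=> Hs Hz ha hind th hth.
have [th0 hth0] := plays_in_theta_exists Hs Hz.
have hth0a := plays_in_theta_take Hs Hz ha hth0.
by rewrite (gm_implements GM (proj1 Hz) hth0); split; apply: hind.
Qed.

End Mechanism.

Section Deviation.

Variables (N : finType) (Theta : N -> finType) (X : finType) (G : game Theta X).
Variables (f : tprofile Theta -> X) (R : forall i : N, Theta i -> X -> X -> Prop).
Hypotheses (GM : is_GM G f) (Hpref : preferences_ok R) (Hsp : strategy_proof R f).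
Hypothesis Hirp : indifference_reaction_proof G R f.
Hypothesis Theta_inhabited : forall k, inhabited (Theta k).

Local Notation history := (history Theta).
Let GF := gm_game_form GM.

Variables (d : N) (t : Theta d) (s1 s2 : sprofile Theta) (z1 z2 : history).
Hypotheses (Hs1 : is_profile G s1) (Hs2 : is_profile G s2).
Hypothesis same_others : forall k, k != d -> forall h, s1 k h = s2 k h.
Hypothesis truthful : unconditional G t (s1 d).
Hypotheses (Hz1 : plays G s1 z1) (Hz2 : plays G s2 z2).

Lemma truthful_in_theta_i P : P <= size z1 -> t \in theta_i d (take P z1).
Proof.
elim: P => [|P IH] hP; first by rewrite take0 inE.
rewrite (plays_theta_i_takeS Hz1) //; case: ifP => hm; last exact: IH (ltnW hP).
by apply: truthful; [exact: (plays_decnode_take GM Hz1 hP hm) | exact: IH (ltnW hP)].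
Qed.

Lemma divergence_indifferent m a a' b b' : m != d -> divergence G z1 z2 m a a' b b' ->
  indifferent_at R f d (take a z1) \/ indifferent_at R f d (take a' z2).
Proof.
move=> hmd [ha ha' hba hba' hm hm' hmb hmb' hk hk' hi hni].
have hd0 := plays_decnode_take GM Hz1 (ltn_trans hba ha) hmb.
have hd1 := plays_decnode_take GM Hz1 ha hm.
have hd2 := plays_decnode_take GM Hz2 ha' hm'.
apply: (Hirp hmd hd0 hd1 hd2 _ _ hni _ Hs1).
- apply: (immediate_succ_take GF _ hba (ltnW ha) hd1); first exact: (gf_info_refl GF).
  by rewrite !size_experience_take ?hk //; lia.
- apply: (immediate_succ_take GF hi hba' (ltnW ha') hd2).
  by rewrite (info_size_experience GF hi) !size_experience_take ?hk' //; lia.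
- rewrite (plays_theta_i_take_last_move Hz1 hba (ltnW ha) hmb hk).
  rewrite (plays_theta_i_take_last_move Hz2 hba' (ltnW ha') hmb' hk').
  by rewrite -same_others //; apply: (proj2 (Hs1 m)).
- exists s1; do !split=> //; exists z1; split=> //.
  by exists (drop a z1); rewrite cat_take_drop.
- exists s2; split=> //; split.
    by move=> k; rewrite !inE => /andP [hkd _] h; rewrite same_others.
  by exists z2; split=> //; exists (drop a' z2); rewrite cat_take_drop.
Qed.

Definition z1_preferred_on (P : nat) : Prop :=
  forall th, in_theta (take P z1) th -> R t (outcome G z1) (f th).
Definition z2_dispreferred_on (P : nat) : Prop :=
  forall th, in_theta (take P z2) th -> R t (f th) (outcome G z2).

Lemma R_refl x : R t x x.
Proof. by case: (proj1 (Hpref t) x x). Qed.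

Lemma R_trans x y w : R t x y -> R t y w -> R t x w.
Proof. exact: (proj2 (Hpref t)). Qed.

Lemma z1_preferred_on_size : z1_preferred_on (size z1).
Proof.
by move=> th; rewrite take_size => hth; rewrite (gm_implements GM (proj1 Hz1) hth); apply: R_refl.
Qed.

Lemma z2_dispreferred_on_size : z2_dispreferred_on (size z2).
Proof.
by move=> th; rewrite take_size => hth; rewrite (gm_implements GM (proj1 Hz2) hth); apply: R_refl.
Qed.

Lemma compatible_prefixes_preferred P1 P2 : P1 <= size z1 -> P2 <= size z2 ->
  (forall k, k != d -> theta_i k (take P1 z1) :&: theta_i k (take P2 z2) != set0) ->
  z1_preferred_on P1 -> z2_dispreferred_on P2 -> R t (outcome G z1) (outcome G z2).
Proof.
move=> hP1 hP2 hcompat h1 h2.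
have ex k : exists x, (x \in theta_i k (take P2 z2)) &&
                      ((k != d) ==> (x \in theta_i k (take P1 z1))).
  have [-> | hkd] := eqVneq k d.
    have /set0Pn [x hx] := plays_theta_i_take_nonempty GM Theta_inhabited Hs2 Hz2 d hP2.
    by exists x; rewrite hx.
  have /set0Pn [x] := hcompat k hkd; rewrite inE => /andP [hx1 hx2].
  by exists x; rewrite hx2 hx1 implybT.
pose th2 : tprofile Theta := fun k => xchoose (ex k).
have hth2 : in_theta (take P2 z2) th2 by move=> k; case/andP: (xchooseP (ex k)).
have hth1 : in_theta (take P1 z1) (dfwith th2 t).
  move=> k; case: dfwithP => [|k' hdk]; first exact: truthful_in_theta_i.
  by case/andP: (xchooseP (ex k')) => _ /implyP; apply; rewrite eq_sym.
have hsp : R t (f (dfwith th2 t)) (f th2).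
  have := @Hsp d (dfwith th2 t) th2.
  by rewrite dfwith_in; apply=> k hk; rewrite dfwith_out // eq_sym.
exact: R_trans (h1 _ hth1) (R_trans hsp (h2 _ hth2)).
Qed.

Lemma disjoint_prefixes_shrink m P1 P2 : m != d -> P1 <= size z1 -> P2 <= size z2 ->
  theta_i m (take P1 z1) :&: theta_i m (take P2 z2) = set0 ->
  (exists2 a, a < P1 & z1_preferred_on a) \/ (exists2 a, a < P2 & z2_dispreferred_on a).
Proof.
move=> hmd hP1 hP2 hI.
have [a [a' [b [b' [hdiv ha ha']]]]] := theta_i_disjoint_divergence GM Theta_inhabited
  Hs1 Hz1 Hs2 Hz2 (same_others hmd) hP1 hP2 hI.
have [hind|hind] := divergence_indifferent hmd hdiv;
  [left; exists a | right; exists a'] => // th hth.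
  by have [] := indifferent_at_outcome GM Theta_inhabited t Hs1 Hz1
    (ltnW (leq_trans ha hP1)) hind hth.
by have [] := indifferent_at_outcome GM Theta_inhabited t Hs2 Hz2
  (ltnW (leq_trans ha' hP2)) hind hth.
Qed.

Lemma deviation_unprofitable : R t (outcome G z1) (outcome G z2).
Proof.
suff: forall P1 P2, P1 <= size z1 -> P2 <= size z2 ->
    z1_preferred_on P1 -> z2_dispreferred_on P2 -> R t (outcome G z1) (outcome G z2).
  by apply; [exact: leqnn | exact: leqnn | exact: z1_preferred_on_size
             | exact: z2_dispreferred_on_size].
move=> P1 P2; have [n] := ubnP (P1 + P2); elim: n P1 P2 => // n IH P1 P2 /ltnSE hn hP1 hP2 h1 h2.
case: (boolP [exists m, (m != d) && (theta_i m (take P1 z1) :&: theta_i m (take P2 z2) == set0)]).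
  case/existsP => m /andP [hmd /eqP hI].
  have [[a ha h1a] | [a ha h2a]] := disjoint_prefixes_shrink hmd hP1 hP2 hI.
    by apply: (IH a P2) => //; [lia | exact: ltnW (leq_trans ha hP1)].
  by apply: (IH P1 a) => //; [lia | exact: ltnW (leq_trans ha hP2)].
rewrite negb_exists => /forallP hcompat.
apply: (compatible_prefixes_preferred hP1 hP2 _ h1 h2) => k hkd.
by move: (hcompat k); rewrite hkd.
Qed.

End Deviation.

Theorem theorem3 (N : finType) (Theta : N -> finType) (X : finType)
  (R : forall i : N, Theta i -> X -> X -> Prop) (f : tprofile Theta -> X)
  (G : game Theta X) :
  preferences_ok R ->
  strategy_proof R f ->
  is_GM G f ->
  indifference_reaction_proof G R f ->
  incentive_compatible G R.
Proof.
move=> Hpref Hsp GM Hirp d t s1 s2 Hs1 Hs2 same_others truthful z1 z2 Hz1 Hz2.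
case: z1 Hz1 => [|x1 z1] Hz1.
  have root_terminal : terminal G [::] by case: Hz1.
  rewrite (plays_root_terminal (gm_game_form GM) root_terminal Hz2).
  by case: (proj1 (Hpref d t) (outcome G [::]) (outcome G [::])).
have Theta_inhabited := nonterminal_root_inhabited GM
  (plays_root_nonterminal (gm_game_form GM) Hz1).
exact: (deviation_unprofitable GM Hpref Hsp Hirp Theta_inhabited
  Hs1 Hs2 same_others truthful Hz1 Hz2).
Qed.
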